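(* Let $\delta t>0$ and $\sigma>0$, and let $(\tilde c_h^{n},c_h^n,\tilde\rho_h^n,\rho_h^n,\lambda_h^n,\xi_h^n,\theta_h^{n-\frac12})_{n\ge 1}$ be any solution of the Crank–Nicolson positivity-preserving scheme (Steps 1–4 in the context), started with $\lambda_h^0\equiv 0$, $\xi_h^0=0$. Then for every $n\ge 0$, $$\lambda_h^{n+1}(z)\ge 0\ \ \forall z\in\Sigma_h,\qquad \xi_h^{n+1}=-\frac{[\lambda_h^{n+1},1]}{|\Omega|}\le 0 .$$
   Context: Discrete setting: $\Sigma_h$ is a finite set of nodes in $\bar\Omega\subset\mathbb R^d$; $X_h$ is identified with the space of real grid functions on $\Sigma_h$ (nodal values), and products, $\log$, etc. act pointwise on nodal values. The discrete inner product is $[u,v]=\sum_{z\in\Sigma_h}\beta_z u(z)v(z)$ with fixed weights $\beta_z>0$ (for vector grid functions $[w,w']=\sum_z\beta_z w(z)\cdot w'(z)$), $\|u\|=[u,u]^{1/2}$, $|\Omega|:=[1,1]$. $\nabla_h$ (discrete gradient) and $\nabla_h\cdot$ (discrete divergence) satisfy summation by parts $[\nabla_h\cdot w,v]=-[w,\nabla_h v]$ and $\nabla_h 1=0$ (periodic boundary conditions); $\Delta_h=\nabla_h\cdot\nabla_h$. Parameters $\epsilon,\mu,\gamma,\chi>0$. Crank–Nicolson positivity scheme for the first Keller–Segel system ($\partial_t\rho=\gamma\Delta\rho-\chi\nabla\cdot(\rho\nabla c)$, $\epsilon\partial_t c=\mu\Delta c+\rho$): write $\tilde c_h^{n+\frac12}=\frac{\tilde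 c_h^{n+1}+c_h^n}{2}$, $\tilde\rho_h^{n+\frac12}=\frac{\tilde\rho_h^{n+1}+\rho_h^n}{2}$, $\rho_h^{n+\frac12}=\frac{\rho_h^{n+1}+\rho_h^n}{2}$. Given $\rho_h^{n-1},\rho_h^n,c_h^n,\tilde c_h^n,\lambda_h^n\in X_h$, $\xi_h^n\in\mathbb R$: Step 1: $\epsilon\frac{\tilde c_h^{n+1}-c_h^n}{\delta t}=\mu\Delta_h\tilde c_h^{n+\frac12}+\frac32\rho_h^n-\frac12\rho_h^{n-1}$. Step 2: $\frac{\tilde\rho_h^{n+1}-\rho_h^n}{\delta t}=\gamma\Delta_h\tilde\rho_h^{n+\frac12}-\chi\nabla_h\cdot(\tilde\rho_h^{n+\frac12}\nabla_h\tilde c_h^{n+\frac12})+\lambda_h^n+\xi_h^n$. Step 3: find $\rho_h^{n+1},\lambda_h^{n+1}\in X_h$, $\xi_h^{n+1}\in\mathbb R$ with $\frac{\rho_h^{n+1}-\tilde\rho_h^{n+1}}{\delta t}=\frac{\lambda_h^{n+1}+\xi_h^{n+1}-\lambda_h^n-\xi_h^n}{2}$ at every node, $\rho_h^{n+1}(z)\ge0$, $\lambda_h^{n+1}(z)\ge0$, $\lambda_h^{n+1}(z)\rho_h^{n+1}(z)=0$ for all $z\in\Sigma_h$, and $[\rho_h^{n+1},1]=[\rho_h^0,1]$. Step 4: find $c_h^{n+1}\in X_h$ and a scalar $\theta_h^{n+\frac12}$ with $\epsilon\frac{c_h^{n+1}-\tilde c_h^{n+1}}{\delta t}=\theta_h^{n+\frac12}$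 and $\frac{E_h^{n+1}-E_h^n}{\delta t}=-\big[\rho_h^{n+\frac12}|\nabla_h(\log(\rho_h^{n+\frac12}+\sigma)-\tilde c_h^{n+\frac12})|^2+|\tfrac{\tilde c_h^{n+1}-\tilde c_h^n}{\delta t}|^2,1\big]$, where $E_h^{k}=[\rho_h^{k}\log(\rho_h^{k}+\sigma)-\rho_h^{k}-\rho_h^{k}c_h^{k}+\frac12|\nabla_h c_h^{k}|^2,1]$. *)

From mathcomp Require Import all_boot all_order all_algebra.
From mathcomp Require Import reals exp.
Set Implicit Arguments. Unset Strict Implicit. Unset Printing Implicit Defensive.
Import Order.TTheory GRing.Theory Num.Theory.
Local Open Scope ring_scope.

Section Grid.
Variables (R : realType) (T : finType) (d : nat).

Definition dip (beta : T -> R) (u v : T -> R) : R :=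
  \sum_(z : T) beta z * u z * v z.

Definition dipv (beta : T -> R) (w w' : T -> 'I_d -> R) : R :=
  \sum_(z : T) beta z * \sum_(i < d) w z i * w' z i.

Definition one_g : T -> R := fun _ => 1.

Definition sqnorm (w : T -> 'I_d -> R) : T -> R :=
  fun z => \sum_(i < d) w z i ^+ 2.

Definition lap (grad : (T -> R) -> T -> 'I_d -> R)
  (div : (T -> 'I_d -> R) -> T -> R) (u : T -> R) : T -> R := div (grad u).

Definition mid (u v : T -> R) : T -> R := fun z => (u z + v z) / 2.

Definition energy (beta : T -> R) (grad : (T -> R) -> T -> 'I_d -> R)
  (sigma : R) (rho c : T -> R) : R :=
  dip beta (fun z => rho z * ln (rho z + sigma) - rho z - rho z * c z
                     + sqnorm (grad c) z / 2) one_g.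

End Grid.
Arguments one_g : clear implicits.

From mathcomp Require Import all_boot all_order all_algebra.
From mathcomp Require Import reals exp.
From mathcomp Require Import ring.

Set Implicit Arguments.
Unset Strict Implicit.
Unset Printing Implicit Defensive.
Import Order.TTheory GRing.Theory Num.Theory.
Local Open Scope ring_scope.

(* Sum Steps 2 and 3 against the constant 1.  The transport terms are
   divergences, hence have zero mass, so with
   A_n := [lambda^n, 1] + xi^n |Omega| the predictor changes the mass by
   dt A_n and the corrector by dt (A_{n+1} - A_n) / 2.  Mass conservation
   then forces A_{n+1} = - A_n, and A_0 = 0 gives A_n = 0 for all n, i.e.
   xi^n = -[lambda^n, 1] / |Omega|, which is <= 0 since lambda^n >= 0. *)

Section DiscreteMass.
Variables (R : realType) (T : finType) (beta : T -> R).

Local Notation mass u := (dip beta u (one_g R T)).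

Definition multiplier_mass (l : T -> R) (x : R) : R := mass l + x * mass (one_g R T).

Lemma mass_ext (f g : T -> R) : f =1 g -> mass f = mass g.
Proof. by move=> efg; apply: eq_bigr => z _; rewrite efg. Qed.

Lemma massD (f g : T -> R) : mass (fun z => f z + g z) = mass f + mass g.
Proof. by rewrite /dip -big_split; apply: eq_bigr => z _; rewrite /one_g /=; ring. Qed.

Lemma massB (f g : T -> R) : mass (fun z => f z - g z) = mass f - mass g.
Proof. by rewrite /dip -sumrB; apply: eq_bigr => z _; rewrite /one_g /=; ring. Qed.

Lemma massZ (k : R) (f : T -> R) : mass (fun z => k * f z) = k * mass f.
Proof. by rewrite /dip mulr_sumr; apply: eq_bigr => z _; rewrite /one_g /=; ring. Qed.

(* [one_g] is itself a constant function: rewrite with [mass_cst] at given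
   constants only, [!mass_cst] does not terminate. *)
Lemma mass_cst (k : R) : mass (fun _ => k) = k * mass (one_g R T).
Proof. by rewrite /dip mulr_sumr; apply: eq_bigr => z _; rewrite /one_g /=; ring. Qed.

Lemma mass_corrector (dt x x' : R) (u v l l' : T -> R) :
  dt != 0 ->
  (forall z, (u z - v z) / dt = (l' z + x' - l z - x) / 2) ->
  mass u - mass v
  = dt / 2 * (multiplier_mass l' x' - multiplier_mass l x).
Proof.
move=> dt_neq0 step.
have -> : mass u - mass v = mass (fun z => dt / 2 * (l' z + x' - l z - x)).
  by rewrite -massB; apply: mass_ext => z; rewrite -[u z - v z](divfK dt_neq0) step;
    field.
by rewrite massZ 2!massB massD (mass_cst x) (mass_cst x') /multiplier_mass; ring.
Qed.

Hypothesis beta_gt0 : forall z, 0 < beta z.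

Lemma mass_ge0 (f : T -> R) : (forall z, 0 <= f z) -> 0 <= mass f.
Proof.
move=> f_ge0; apply: sumr_ge0 => z _.
by rewrite /one_g mulr1 mulr_ge0 // ltW.
Qed.

Lemma mass_one_gt0 : (0 < #|T|)%N -> 0 < mass (one_g R T).
Proof.
case/card_gt0P=> z0 _; rewrite /dip (bigD1 z0) //= /one_g !mulr1.
by rewrite ltr_wpDr // sumr_ge0 // => z _; rewrite !mulr1 ltW.
Qed.

Lemma multiplier_mass0_xi (l : T -> R) (x : R) :
  (0 < #|T|)%N -> multiplier_mass l x = 0 ->
  x = - mass l / mass (one_g R T).
Proof.
move=> T_gt0 /eqP; rewrite addr_eq0 => /eqP ->.
by rewrite opprK mulfK // lt0r_neq0 // mass_one_gt0.
Qed.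

Lemma multiplier_mass0_xi_le0 (l : T -> R) (x : R) :
  (0 < #|T|)%N -> (forall z, 0 <= l z) -> multiplier_mass l x = 0 -> x <= 0.
Proof.
move=> T_gt0 l_ge0 /(multiplier_mass0_xi T_gt0) ->.
by rewrite mulNr oppr_le0 divr_ge0 ?mass_ge0 // ltW // mass_one_gt0.
Qed.

End DiscreteMass.

Section MassBalance.
Variables (R : realType) (T : finType) (d : nat) (beta : T -> R).
Variables (grad : (T -> R) -> T -> 'I_d -> R) (div : (T -> 'I_d -> R) -> T -> R).
Hypothesis sum_by_parts :
  forall w v, dip beta (div w) v = - dipv beta w (grad v).
Hypothesis grad_one : grad (one_g R T) = (fun _ _ => 0).

Local Notation mass u := (dip beta u (one_g R T)).

Lemma mass_div (w : T -> 'I_d -> R) : mass (div w) = 0.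
Proof.
rewrite sum_by_parts grad_one /dipv big1 ?oppr0 // => z _.
by rewrite big1 ?mulr0 // => i _; rewrite mulr0.
Qed.

Lemma mass_predictor (dt a b x : R) (u v l : T -> R) (w1 w2 : T -> 'I_d -> R) :
  dt != 0 ->
  (forall z, (u z - v z) / dt = a * div w1 z - b * div w2 z + l z + x) ->
  mass u - mass v = dt * multiplier_mass beta l x.
Proof.
move=> dt_neq0 step.
have -> : mass u - mass v
        = mass (fun z => dt * (a * div w1 z - b * div w2 z + l z + x)).
  by rewrite -massB; apply: mass_ext => z; rewrite -step; field.
by rewrite massZ 2!massD massB !massZ !mass_div mass_cst /multiplier_mass; ring.
Qed.

End MassBalance.

Theorem mainTheorem1
  (R : realType) (T : finType) (d : nat)
  (beta : T -> R)
  (grad : (T -> R) -> T -> 'I_d -> R)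
  (div : (T -> 'I_d -> R) -> T -> R)
  (eps mu gamma chi sigma dt : R)
  (rho rhot c ct lam : nat -> T -> R) (xi theta : nat -> R)
  (rhom1 : T -> R)
  (* standing assumptions on the discrete setting *)
  (HT : (0 < #|T|)%N)
  (Hbeta : forall z, 0 < beta z)
  (Hsbp : forall (w : T -> 'I_d -> R) (v : T -> R),
            dip beta (div w) v = - dipv beta w (grad v))
  (Hgrad1 : grad (one_g R T) = (fun _ _ => 0))
  (Heps : 0 < eps) (Hmu : 0 < mu) (Hgamma : 0 < gamma) (Hchi : 0 < chi)
  (Hsigma : 0 < sigma) (Hdt : 0 < dt)
  (* initialization lambda^0 = 0, xi^0 = 0 *)
  (Hlam0 : forall z, lam 0%N z = 0) (Hxi0 : xi 0%N = 0)
  (* Step 1 (rho^{-1} := rhom1 at n = 0) *)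
  (Hstep1 : forall n z,
     eps * ((ct n.+1 z - c n z) / dt)
     = mu * lap grad div (mid (ct n.+1) (c n)) z
       + 3 / 2 * rho n z
       - 1 / 2 * (if n is m.+1 then rho m z else rhom1 z))
  (* Step 2 *)
  (Hstep2 : forall n z,
     (rhot n.+1 z - rho n z) / dt
     = gamma * lap grad div (mid (rhot n.+1) (rho n)) z
       - chi * div (fun y i => mid (rhot n.+1) (rho n) y
                               * grad (mid (ct n.+1) (c n)) y i) z
       + lam n z + xi n)
  (* Step 3 *)
  (Hstep3 : forall n,
     (forall z, (rho n.+1 z - rhot n.+1 z) / dt
                = (lam n.+1 z + xi n.+1 - lam n z - xi n) / 2)
     /\ (forall z, 0 <= rho n.+1 z)
     /\ (forall z, 0 <= lam n.+1 z)
     /\ (forall z, lam n.+1 z * rho n.+1 z = 0)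
     /\ dip beta (rho n.+1) (one_g R T) = dip beta (rho 0%N) (one_g R T))
  (* Step 4 (theta n stands for theta_h^{n+1/2}) *)
  (Hstep4 : forall n,
     (forall z, eps * ((c n.+1 z - ct n.+1 z) / dt) = theta n)
     /\ (energy beta grad sigma (rho n.+1) (c n.+1)
         - energy beta grad sigma (rho n) (c n)) / dt
        = - dip beta
              (fun z =>
                 mid (rho n.+1) (rho n) z
                 * sqnorm (grad (fun y => ln (mid (rho n.+1) (rho n) y + sigma)
                                          - mid (ct n.+1) (c n) y)) z
                 + ((ct n.+1 z - ct n z) / dt) ^+ 2)
              (one_g R T)) :
  forall n : nat,
    (forall z, 0 <= lam n.+1 z)
    /\ xi n.+1 = - dip beta (lam n.+1) (one_g R T) / dip beta (one_g R T) (one_g R T)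
    /\ xi n.+1 <= 0.
Proof.
pose A k := multiplier_mass beta (lam k) (xi k).
have dt_neq0 : dt != 0 by rewrite lt0r_neq0.
have mass_conserved n :
    dip beta (rho n.+1) (one_g R T) = dip beta (rho n) (one_g R T).
  have [_ [_ [_ [_ ->]]]] := Hstep3 n.
  by case: n => // m; have [_ [_ [_ [_ ->]]]] := Hstep3 m.
have A_flip n : A n.+1 = - A n.
  have predictor := mass_predictor Hsbp Hgrad1 dt_neq0 (Hstep2 n).
  have corrector := mass_corrector beta dt_neq0 (proj1 (Hstep3 n)).
  have dt2_neq0 : dt / 2 != 0 by rewrite mulf_neq0 // invr_eq0 pnatr_eq0.
  have : dt / 2 * (A n.+1 + A n) = dt / 2 * 0.
    have -> : dt / 2 * (A n.+1 + A n) = dt / 2 * (A n.+1 - A n) + dt * A n by field.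
    by rewrite -corrector -predictor mass_conserved; ring.
  by move/(mulfI dt2_neq0)/eqP; rewrite addr_eq0 => /eqP.
have A0 n : A n = 0.
  elim: n => [|n IH]; last by rewrite A_flip IH oppr0.
  by rewrite /A /multiplier_mass (mass_ext _ Hlam0) (mass_cst beta 0) Hxi0; ring.
move=> n; have [_ [_ [lam_ge0 _]]] := Hstep3 n.
split=> //; split.
- by apply: (multiplier_mass0_xi Hbeta HT); apply: A0.
- by apply: (multiplier_mass0_xi_le0 Hbeta HT lam_ge0); apply: A0.
Qed.
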